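(* Let $\Omega\subset\mathbb{R}^N$ be a nonempty open bounded connected set, $X=\overline{\Omega}$, $Y\subset\mathbb{R}^N$, $\mu\in\mathcal{P}(X)$, $\nu\in\mathcal{P}(Y)$, $H,K:X\to(0,+\infty)$ in $L^1(X,\mu)$, $\mathcal{A}$ a family of balls covering $X$, and $u\in\mathrm{Refo}(\mu;\nu)^{H,K}$. If $u$ is differentiable at $x_0\in\Omega$, then $Ju(x_0)=\det\nabla u(x_0)\neq0$.
   Context: For $u:X\to Y$, $x_0\in X$: $e_u(x_0)=\limsup_{x\to x_0,\,x\ne x_0}\frac{|u(x)-u(x_0)|}{|x-x_0|}$, $c_u(x_0)=\limsup_{x\to x_0,\,x\ne x_0}\frac{|x-x_0|}{|u(x)-u(x_0)|}$ (quotient $+\infty$ if $u(x)=u(x_0)$). $\mathrm{Refo}(\mu;\nu)^{H,K}$ is the set of maps $u:X\to Y$ with $u_\#\mu=\nu$ (i.e. $\mu(u^{-1}(A))=\nu(A)$ for Borel $A$) such that for every $x\in X$ there is $B(x,r)\in\mathcal{A}$ with $c_u(y)\le H(x)$, $e_u(y)\le K(x)$ for all $y\in\overline{B}(x,r)\cap\Omega$. *)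

From HB Require Import structures.
From mathcomp Require Import all_boot all_order all_algebra.
From mathcomp Require Import all_classical all_reals all_analysis.
Set Implicit Arguments. Unset Strict Implicit. Unset Printing Implicit Defensive.
Import Order.TTheory GRing.Theory Num.Theory.
Import numFieldNormedType.Exports.
Local Open Scope classical_set_scope.
Local Open Scope ring_scope.

Section Defs.
Variables (R : realType) (N : nat).
Notation V := 'rV[R]_N.

Definition enorm (v : V) : R := Num.sqrt (\sum_(i < N) v ord0 i ^+ 2).

Definition eball (x : V) (r : R) : set V := [set y | enorm (y - x) < r].
Definition ecball (x : V) (r : R) : set V := [set y | enorm (y - x) <= r].

Definition BorelRV : Type := g_sigma_algebraType (@open V).

Definition quot_e (u : V -> V) (x0 x : V) : \bar R :=
  (enorm (u x - u x0) / enorm (x - x0))%:E.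
Definition quot_c (u : V -> V) (x0 x : V) : \bar R :=
  if u x == u x0 then +oo%E else (enorm (x - x0) / enorm (u x - u x0))%:E.

(** limsup_{x -> x0, x <> x0, x in D} q x
    = inf_{r > 0} sup { q x | x in D, 0 < |x - x0| < r }. *)
Definition limsup_punct (D : set V) (q : V -> \bar R) (x0 : V) : \bar R :=
  ereal_inf [set ereal_sup (q @` [set x | D x /\ 0 < enorm (x - x0) < r])
            | r in [set r : R | 0 < r]].

Definition e_u (X : set V) (u : V -> V) (x0 : V) : \bar R :=
  limsup_punct X (quot_e u x0) x0.
Definition c_u (X : set V) (u : V -> V) (x0 : V) : \bar R :=
  limsup_punct X (quot_c u x0) x0.

(** Refo(mu; nu)^{H,K}: the family A of balls is given as a set of
    (center, radius) pairs; u is a map X -> Y (u(X) ⊆ Y) with u_# mu = nu. *)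
Definition Refo (Omega X Y : set V)
    (mu nu : set BorelRV -> \bar R) (H K : V -> R) (A : set (V * R))
    (u : V -> V) : Prop :=
  [/\ u @` X `<=` Y,
      (forall B : set BorelRV, measurable B ->
          mu (X `&` u @^-1` B) = nu B)
    & forall x, X x -> exists r, A (x, r) /\
        forall y, ecball x r y -> Omega y ->
          (c_u X u y <= (H x)%:E)%E /\ (e_u X u y <= (K x)%:E)%E].

End Defs.

(** If [Ju(x0)] were singular, some [v <> 0] would satisfy [v *m 'J u x0 = 0],
    so [|u(x0 + h v) - u(x0)| = o(h)].  On the other hand [c_u(x0) <= H(x0)]
    bounds [|x - x0|] by a fixed multiple of [|u(x) - u(x0)|] near [x0]; at
    [x = x0 + h v] with [h > 0] small the two estimates are incompatible. *)
From HB Require Import structures.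
From mathcomp Require Import all_boot all_order all_algebra.
From mathcomp Require Import all_classical all_reals all_analysis.
From mathcomp Require Import ring.
Set Implicit Arguments. Unset Strict Implicit. Unset Printing Implicit Defensive.
Import Order.TTheory GRing.Theory Num.Theory.
Import numFieldNormedType.Exports.
Local Open Scope classical_set_scope.
Local Open Scope ring_scope.

Section EuclideanNorm.
Variables (R : realType) (N : nat).
Implicit Types (v w : 'rV[R]_N).

Lemma mx_norm_entry_le w i : `|w ord0 i| <= `|w|.
Proof.
change (`|w ord0 i| <= mx_norm w); rewrite mx_normrE.
exact: (le_bigmax _ (fun ij : 'I_1 * 'I_N => `|w ij.1 ij.2|) (ord0, i)).
Qed.

Lemma enorm_le_mx_norm w : enorm w <= N%:R * `|w|.
Proof.
rewrite /enorm -(@ger0_norm _ (N%:R * `|w|)) ?mulr_ge0 //.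
rewrite -sqrtr_sqr ler_sqrt ?sqr_ge0 //.
apply: (@le_trans _ _ (\sum_(i < N) `|w| ^+ 2)).
  apply: ler_sum => i _; rewrite -real_normK ?num_real //.
  by rewrite lerXn2r ?nnegrE ?normr_ge0 ?mx_norm_entry_le.
rewrite sumr_const card_ord -[_ *+ N]mulr_natl exprMn ler_wpM2r ?sqr_ge0 //.
by rewrite expr2 -natrM ler_nat; case: N => // n; exact: leq_pmull.
Qed.

Lemma enormZ (a : R) w : enorm (a *: w) = `|a| * enorm w.
Proof.
rewrite /enorm -sqrtr_sqr -sqrtrM ?sqr_ge0 // mulr_sumr.
by congr Num.sqrt; apply: eq_bigr => i _; rewrite mxE exprMn.
Qed.

Lemma enorm0 : enorm (0 : 'rV[R]_N) = 0.
Proof. by rewrite /enorm big1 ?sqrtr0 // => i _; rewrite mxE expr0n. Qed.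

Lemma enorm_gt0 w : w != 0 -> 0 < enorm w.
Proof.
move=> w_neq0; have [i wi_neq0] : exists i, w ord0 i != 0.
  apply/existsP; apply: contraR w_neq0 => /existsPn w0; apply/eqP/rowP => i.
  by rewrite mxE; apply/eqP; move: (w0 i); rewrite negbK.
rewrite /enorm sqrtr_gt0 (bigD1 i) //= ltr_pwDl ?sumr_ge0 => *;
  by rewrite ?lt0r ?sqrf_eq0 ?wi_neq0 ?sqr_ge0.
Qed.

End EuclideanNorm.

Lemma c_u_lt_lower_bound (R : realType) (N : nat) (X : set 'rV[R]_N)
    (u : 'rV[R]_N -> 'rV[R]_N) (x0 : 'rV[R]_N) (M : R) :
  (c_u X u x0 < M%:E)%E ->
  exists2 rho, 0 < rho & forall x, X x -> 0 < enorm (x - x0) < rho ->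
    enorm (x - x0) < M * enorm (u x - u x0).
Proof.
move=> /ereal_inf_lt [_ [rho /= rho_gt0 <-]] sup_lt; exists rho => // x Xx xrho.
have : (quot_c u x0 x < M%:E)%E.
  by apply: le_lt_trans sup_lt; apply: ereal_sup_ubound; exists x.
rewrite /quot_c; case: eqP => [//|/eqP ux_neq].
have ux_gt0 : 0 < enorm (u x - u x0) by rewrite enorm_gt0 // subr_eq0.
by rewrite lte_fin ltr_pdivrMr.
Qed.

Lemma increment_littleo (R : realType) (U V : normedModType R) (f : U -> V) x v :
  derivable f x v -> 'D_v f x = 0 ->
  forall eps, 0 < eps -> \forall h \near 0 : R, `|f (h *: v + x) - f x| <= eps * `|h|.
Proof.
move=> df Df0 eps eps_gt0; have /eqaddoP /(_ eps eps_gt0) := derivable_nbhs df.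
by apply: filterS => h /=; rewrite /cst /= Df0 !fctE scaler0 addr0.
Qed.

Lemma jacobian_det_neq0 (R : realType) (N : nat) (X : set 'rV[R]_N)
    (u : 'rV[R]_N -> 'rV[R]_N) (x0 : 'rV[R]_N) (c : R) :
  nbhs x0 X -> (c_u X u x0 <= c%:E)%E -> differentiable u x0 ->
  \det ('J u x0) != 0.
Proof.
move=> X_nbhs cu_le du; apply/negP => /det0P [v v_neq0 vJ].
have Dv0 : 'D_v u x0 = 0 by rewrite deriveEjacobian.
have v_gt0 := enorm_gt0 v_neq0.
set M := `|c| + 1; have M_gt0 : 0 < M by rewrite ltr_pwDr ?normr_ge0.
have [rho rho_gt0 lower] : exists2 rho, 0 < rho & forall x, X x ->
    0 < enorm (x - x0) < rho -> enorm (x - x0) < M * enorm (u x - u x0).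
  apply: c_u_lt_lower_bound; apply: (le_lt_trans cu_le).
  by rewrite lte_fin (le_lt_trans (ler_norm c)) // ltrDl.
set eps := enorm v / (M * N.+1%:R).
have eps_gt0 : 0 < eps by rewrite divr_gt0 // mulr_gt0.
have shift_cvg : (fun h : R => h *: v + x0) @ 0^'+ --> x0.
  rewrite -[x0 in _ --> x0](add0r x0) -(scale0r v).
  apply: cvgD; last exact: cvg_cst.
  by apply: cvgZ; [apply: cvg_within_filter; exact: cvg_id | exact: cvg_cst].
have small := increment_littleo (@diff_derivable _ _ _ u x0 v du) Dv0 eps_gt0.
have [h [h_gt0 du_small Xx h_lt]] : exists h : R, [/\ 0 < h,
    `|u (h *: v + x0) - u x0| <= eps * `|h|, X (h *: v + x0)
    & h < rho / enorm v].
  apply: (@filter_ex R 0^'+); near=> h; split.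
  - by near: h; exact: nbhs_right_gt.
  - near: h; apply: cvg_within; exact: small.
  - by near: h; exact: shift_cvg.
  - by near: h; apply: nbhs_right_lt; rewrite divr_gt0.
set x := h *: v + x0.
have dist_x : enorm (x - x0) = h * enorm v by rewrite addrK enormZ gtr0_norm.
have du_bound : enorm (u x - u x0) <= N.+1%:R * (eps * h).
  rewrite -[h]gtr0_norm //; apply: le_trans (enorm_le_mx_norm _) _.
  by apply: ler_pM; rewrite ?ler_nat ?normr_ge0.
have := lower x Xx; rewrite dist_x mulr_gt0 //= -ltr_pdivlMr // h_lt.
move=> /(_ isT) /lt_le_trans /(_ (ler_wpM2l (ltW M_gt0) du_bound)).
have -> : M * (N.+1%:R * (eps * h)) = h * enorm v.
  by rewrite /eps; field; rewrite !gt_eqF.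
by rewrite ltxx.
Unshelve. all: by end_near.
Qed.

Theorem lemma2p10 (R : realType) (N : nat)
  (Omega Y : set 'rV[R]_N)
  (mu nu : probability (BorelRV R N) R)
  (H K : 'rV[R]_N -> R) (A : set ('rV[R]_N * R))
  (u : 'rV[R]_N -> 'rV[R]_N) (x0 : 'rV[R]_N) :
  Omega !=set0 -> open Omega -> bounded_set Omega -> connected Omega ->
  (* mu in P(X), X = closure Omega *)
  mu (~` closure Omega) = 0%E ->
  (* nu in P(Y): a probability on the Borel sets of Y (trace sigma-algebra) *)
  (forall B C : set (BorelRV R N), measurable B -> measurable C ->
     B `&` Y = C `&` Y -> nu B = nu C) ->
  (* H, K : X -> (0, +oo), in L^1(X, mu) *)
  (forall x, closure Omega x -> 0 < H x) ->
  (forall x, closure Omega x -> 0 < K x) ->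
  mu.-integrable (closure Omega) (EFin \o H) ->
  mu.-integrable (closure Omega) (EFin \o K) ->
  (* A is a family of (nondegenerate) balls covering X *)
  (forall p, A p -> 0 < p.2) ->
  closure Omega `<=` \bigcup_(p in A) eball p.1 p.2 ->
  Refo Omega (closure Omega) Y mu nu H K A u ->
  Omega x0 -> differentiable u x0 ->
  \det ('J u x0) != 0.
Proof.
move=> _ Omega_open _ _ _ _ _ _ _ _ A_pos _ [_ _ refo] Omega_x0 du.
have [r [Ar bounds]] := refo x0 (subset_closure Omega_x0).
have x0_in_ball : ecball x0 r x0.
  by rewrite /ecball /= subrr enorm0 (ltW (A_pos _ Ar)).
have [cu_le _] := bounds x0 x0_in_ball Omega_x0.
apply: jacobian_det_neq0 cu_le du.
by apply: (filterS (@subset_closure _ _)); exact: open_nbhs_nbhs.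
Qed.
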